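(* Let $M=15$, let $1\le i_1<i_2<\dots<i_k$ and $j_1,\dots,j_k$ be positive integers such that $i_{l+1}-i_l\ge j_l$ for each $1\le l<k$. Then $\widehat Q_{i_1\cdots i_k}^{j_1\cdots j_k}$ consists of at most $M^k2^{\,i_k-j_1-j_2-\cdots-j_{k-1}}$ intervals in $\mathcal D_{i_k+j_k}$.
   Context: $\mathbb T=\mathbb R/\mathbb Z\cong[0,1)$, $Tx=2x\bmod1$, $d$ the usual distance on $\mathbb T$. $\mathcal D_n$ is the collection of dyadic intervals $[m/2^n,(m+1)/2^n)$. For $i,j\ge1$, $Q_i^j=\{x:d(T^ix,x)\le2^{-j}\}$ and $\widehat Q_i^j$ is the union of all intervals of $\mathcal D_{i+j}$ that intersect $Q_i^j$. Then $\widehat Q_{i_1\cdots i_k}^{j_1\cdots j_k}:=\bigcap_{\nu=1}^k\widehat Q_{i_\nu}^{j_\nu}$. *)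

From Stdlib Require Import Reals Lra Lia ZArith List.
Open Scope R_scope.

Definition frac (x : R) : R := x - IZR (Int_part x).

(* the doubling map T x = 2x mod 1 on T = R/Z ≅ [0,1) *)
Definition Tmap (x : R) : R := frac (2 * x).

Fixpoint Titer (n : nat) (x : R) : R :=
  match n with O => x | S n' => Tmap (Titer n' x) end.

Definition dT (x y : R) : R := Rmin (frac (x - y)) (1 - frac (x - y)).

(* dyadic interval [m/2^n, (m+1)/2^n) of D_n (for m < 2^n) *)
Definition in_dyadic (n m : nat) (x : R) : Prop :=
  INR m / 2 ^ n <= x < (INR m + 1) / 2 ^ n.

Definition Q (i j : nat) (x : R) : Prop :=
  0 <= x < 1 /\ dT (Titer i x) x <= / 2 ^ j.

Definition Qhat (i j : nat) (x : R) : Prop :=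
  exists m : nat, (m < 2 ^ (i + j))%nat /\ in_dyadic (i + j) m x /\
    exists y, in_dyadic (i + j) m y /\ Q i j y.

Definition Qhat_multi (k : nat) (i j : nat -> nat) (x : R) : Prop :=
  forall nu : nat, (1 <= nu <= k)%nat -> Qhat (i nu) (j nu) x.

Definition sum_j_upto (j : nat -> nat) (k : nat) : nat :=
  fold_right Nat.add 0%nat (map j (seq 1 (k - 1))).

Definition M : R := 15.

From Stdlib Require Import Reals ZArith List Lra Lia ClassicalEpsilon.
Open Scope R_scope.

(* If an interval [m/N, (m+1)/N) of D_{i+j}, N = 2^{i+j}, meets Q_i^j, then
   (2^i - 1) x is within 2^{-j} of an integer p for some x in it, so
   (2^i - 1) m lies within 2^i of p N.  Inside one interval of a coarser D_a
   with a <= i only 2^{i-a} + 2 values of p are possible, and each p allows at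
   most 5 values of m: at most 15 * 2^{i-a} intervals survive.  Refining from
   D_{i_l + j_l} to D_{i_{l+1} + j_{l+1}} thus multiplies the number of
   intervals by at most 15 * 2^{i_{l+1} - i_l - j_l}, and the product
   telescopes to 15^k 2^{i_k - j_1 - ... - j_{k-1}}. *)

Lemma frac_add_IZR (r : R) (z : Z) : frac (r + IZR z) = frac r.
Proof.
  unfold frac. destruct (base_Int_part r) as [H1 H2].
  rewrite <- (Int_part_spec (r + IZR z) (Int_part r + z)); rewrite plus_IZR.
  - ring.
  - lra.
Qed.

Lemma frac_small (r : R) : 0 <= r < 1 -> frac r = r.
Proof.
  intros Hr. unfold frac. rewrite <- (Int_part_spec r 0); simpl; lra.
Qed.

Lemma frac_sub_frac (a b : R) : frac (frac a - b) = frac (a - b).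
Proof.
  unfold frac at 2.
  replace (a - IZR (Int_part a) - b) with (a - b + IZR (- Int_part a))
    by (rewrite opp_IZR; ring).
  apply frac_add_IZR.
Qed.

Lemma frac_mul_frac (z : Z) (r : R) : frac (IZR z * frac r) = frac (IZR z * r).
Proof.
  unfold frac at 2.
  replace (IZR z * (r - IZR (Int_part r))) with (IZR z * r + IZR (- z * Int_part r))
    by (rewrite mult_IZR, opp_IZR; ring).
  apply frac_add_IZR.
Qed.

Lemma Titer_frac (n : nat) (y : R) : 0 <= y < 1 -> Titer n y = frac (2 ^ n * y).
Proof.
  intros Hy. induction n as [|n IH]; simpl.
  - rewrite Rmult_1_l, frac_small; auto.
  - rewrite IH. unfold Tmap. rewrite (frac_mul_frac 2). f_equal. ring.
Qed.

Lemma Rmin_frac_le_near_nat (w e : R) :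
  0 <= w -> Rmin (frac w) (1 - frac w) <= e ->
  exists p : nat, INR p - e <= w <= INR p + e.
Proof.
  intros Hw He. unfold frac in He. destruct (base_Int_part w) as [H1 H2].
  set (z := Int_part w) in *.
  assert (Hz : (-1 < z)%Z) by (apply lt_IZR; lra).
  unfold Rmin in He. destruct (Rle_dec (w - IZR z) (1 - (w - IZR z))).
  - exists (Z.to_nat z). rewrite INR_IZR_INZ, Z2Nat.id by lia. lra.
  - exists (Z.to_nat (z + 1)). rewrite INR_IZR_INZ, Z2Nat.id by lia.
    rewrite plus_IZR. lra.
Qed.

Lemma Q_near_nat (i j : nat) (y : R) :
  Q i j y -> exists p : nat, INR p - / 2 ^ j <= (2 ^ i - 1) * y <= INR p + / 2 ^ j.
Proof.
  intros [Hy Hd]. unfold dT in Hd.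
  rewrite Titer_frac, frac_sub_frac in Hd by exact Hy.
  replace (2 ^ i * y - y) with ((2 ^ i - 1) * y) in Hd by ring.
  apply Rmin_frac_le_near_nat; [|exact Hd].
  assert (1 <= 2 ^ i) by (apply pow_R1_Rle; lra). nra.
Qed.

Lemma INR_pow2 (n : nat) : INR (2 ^ n) = 2 ^ n.
Proof. rewrite pow_INR. replace (INR 2) with 2 by (simpl; ring). reflexivity. Qed.

Lemma in_dyadic_iff (n m : nat) (x : R) :
  in_dyadic n m x <-> INR m <= x * 2 ^ n < INR m + 1.
Proof.
  assert (Hn : 0 < 2 ^ n) by (apply pow_lt; lra).
  unfold in_dyadic. split; intros [H1 H2]; split.
  - apply (Rmult_le_compat_r (2 ^ n)) in H1; [|lra].
    unfold Rdiv in H1. rewrite Rmult_assoc, Rinv_l, Rmult_1_r in H1; lra.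
  - apply (Rmult_lt_compat_r (2 ^ n)) in H2; [|lra].
    unfold Rdiv in H2. rewrite Rmult_assoc, Rinv_l, Rmult_1_r in H2; lra.
  - apply Rmult_le_reg_r with (2 ^ n); [lra|]. unfold Rdiv.
    rewrite Rmult_assoc, Rinv_l, Rmult_1_r; lra.
  - apply Rmult_lt_reg_r with (2 ^ n); [lra|]. unfold Rdiv.
    rewrite Rmult_assoc, Rinv_l, Rmult_1_r; lra.
Qed.

Lemma in_dyadic_unique (n m m' : nat) (x : R) :
  in_dyadic n m x -> in_dyadic n m' x -> m = m'.
Proof.
  rewrite !in_dyadic_iff. intros H H'.
  assert (Hlt : INR m < INR (S m')) by (rewrite S_INR; lra).
  assert (Hlt' : INR m' < INR (S m)) by (rewrite S_INR; lra).
  apply INR_lt in Hlt, Hlt'. lia.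
Qed.

Lemma in_dyadic_coarsen (a n m : nat) (x : R) :
  (a <= n)%nat -> in_dyadic n m x -> in_dyadic a (m / 2 ^ (n - a)) x.
Proof.
  intros Han. rewrite !in_dyadic_iff.
  set (D := (2 ^ (n - a))%nat).
  assert (HD : (D <> 0)%nat) by (apply Nat.pow_nonzero; lia).
  assert (Hq : (D * (m / D) <= m /\ S m <= D * (m / D) + D)%nat).
  { pose proof (Nat.div_mod m D HD). pose proof (Nat.mod_upper_bound m D HD). lia. }
  destruct Hq as [Hq1 Hq2].
  apply le_INR in Hq1, Hq2. rewrite S_INR, plus_INR, !mult_INR in *.
  assert (HDr : INR D = 2 ^ (n - a)) by apply INR_pow2.
  assert (Hn : 2 ^ n = 2 ^ a * INR D) by (rewrite HDr, <- pow_add; f_equal; lia).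
  assert (HDpos : 0 < INR D) by (apply lt_0_INR; lia).
  rewrite Hn. intros [H1 H2]. split; nra.
Qed.

Lemma in_dyadic_coarse_index (a n m ma : nat) (x : R) :
  (a <= n)%nat -> in_dyadic n m x -> in_dyadic a ma x -> ma = (m / 2 ^ (n - a))%nat.
Proof.
  intros Han Hx Hxa. apply (in_dyadic_unique a _ _ x); [exact Hxa|].
  apply in_dyadic_coarsen; assumption.
Qed.

Lemma in_dyadic_left_end (n m : nat) : in_dyadic n m (INR m / 2 ^ n).
Proof.
  assert (0 < 2 ^ n) by (apply pow_lt; lra).
  apply in_dyadic_iff. unfold Rdiv. rewrite Rmult_assoc, Rinv_l; lra.
Qed.

Definition near_multiple (i j m : nat) : Prop :=
  exists p : nat,
    ((2 ^ i - 1) * m <= p * 2 ^ (i + j) + 2 ^ i)%nat /\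
    (p * 2 ^ (i + j) < (2 ^ i - 1) * (m + 1) + 2 ^ i)%nat.

Lemma Q_near_multiple (i j m : nat) (y : R) :
  (1 <= i)%nat -> in_dyadic (i + j) m y -> Q i j y -> near_multiple i j m.
Proof.
  intros Hi Hm Hy. destruct (Q_near_nat i j y Hy) as [p [Hp1 Hp2]]. exists p.
  apply in_dyadic_iff in Hm. rewrite pow_add in Hm.
  assert (HP : 2 <= 2 ^ i).
  { replace 2 with (2 ^ 1) at 1 by ring. apply Rle_pow; [lra | exact Hi]. }
  assert (HB : 0 < 2 ^ j) by (apply pow_lt; lra).
  assert (HP1 : INR (2 ^ i - 1) = 2 ^ i - 1).
  { rewrite minus_INR, INR_pow2; [reflexivity|].
    apply Nat.neq_0_lt_0, Nat.pow_nonzero. lia. }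
  set (u := y * (2 ^ i * 2 ^ j)) in Hm.
  assert (Hu1 : INR p * (2 ^ i * 2 ^ j) - 2 ^ i <= (2 ^ i - 1) * u).
  { apply (Rmult_le_compat_r (2 ^ i * 2 ^ j)) in Hp1; [|nra].
    unfold u. replace ((INR p - / 2 ^ j) * (2 ^ i * 2 ^ j))
      with (INR p * (2 ^ i * 2 ^ j) - 2 ^ i) in Hp1 by (field; lra). lra. }
  assert (Hu2 : (2 ^ i - 1) * u <= INR p * (2 ^ i * 2 ^ j) + 2 ^ i).
  { apply (Rmult_le_compat_r (2 ^ i * 2 ^ j)) in Hp2; [|nra].
    unfold u. replace ((INR p + / 2 ^ j) * (2 ^ i * 2 ^ j))
      with (INR p * (2 ^ i * 2 ^ j) + 2 ^ i) in Hp2 by (field; lra). lra. }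
  clearbody u. split.
  - apply INR_le. rewrite plus_INR, !mult_INR, HP1, !INR_pow2, pow_add. nra.
  - apply INR_lt. rewrite !plus_INR, !mult_INR, plus_INR, HP1, !INR_pow2, pow_add.
    simpl. nra.
Qed.

Lemma near_multiple_index_window (P N p m : nat) :
  (2 <= P)%nat -> ((P - 1) * m <= p * N + P)%nat ->
  (p * N < (P - 1) * (m + 1) + P)%nat ->
  (m <= (p * N + P) / (P - 1) < m + 5)%nat.
Proof.
  intros HP H1 H2. split.
  - apply Nat.div_le_lower_bound; lia.
  - apply Nat.Div0.div_lt_upper_bound; nia.
Qed.

Definition witness_start (i j a m0 : nat) : nat :=
  (((2 ^ i - 1) * m0 * 2 ^ (i + j - a) - 2 ^ i) / 2 ^ (i + j))%nat.

(* A superset of the indices m of D_{i+j} inside the interval m0 of D_a with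
   near_multiple i j m: the witness p ranges over a window of 2^(i-a) + 2
   values, and m over the 5 values below (p 2^(i+j) + 2^i) / (2^i - 1). *)
Definition near_multiple_candidates (i j a m0 : nat) : list nat :=
  flat_map (fun p => map (fun t => (p * 2 ^ (i + j) + 2 ^ i) / (2 ^ i - 1) - t)%nat (seq 0 5))
    (seq (witness_start i j a m0) (2 ^ (i - a) + 2)%nat).

Lemma near_multiple_candidates_length (i j a m0 : nat) :
  length (near_multiple_candidates i j a m0) = ((2 ^ (i - a) + 2) * 5)%nat.
Proof.
  unfold near_multiple_candidates.
  rewrite (flat_map_constant_length (c := 5%nat)), length_seq; [reflexivity|].
  intros p _. rewrite length_map, length_seq. reflexivity.
Qed.

Lemma witness_start_le (i j a m p : nat) :
  (a <= i)%nat ->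
  ((2 ^ i - 1) * m <= p * 2 ^ (i + j) + 2 ^ i)%nat ->
  (witness_start i j a (m / 2 ^ (i + j - a)) <= p)%nat.
Proof.
  intros Ha H1. unfold witness_start.
  set (D := (2 ^ (i + j - a))%nat).
  assert (Hm : (D * (m / D) <= m)%nat) by (apply Nat.Div0.mul_div_le).
  apply Nat.Div0.div_le_upper_bound.
  assert ((2 ^ i - 1) * (D * (m / D)) <= (2 ^ i - 1) * m)%nat
    by (apply Nat.mul_le_mono_l; exact Hm).
  lia.
Qed.

Lemma witness_start_gt (i j a m p : nat) :
  (1 <= j)%nat -> (a <= i)%nat ->
  (p * 2 ^ (i + j) < (2 ^ i - 1) * (m + 1) + 2 ^ i)%nat ->
  (p < witness_start i j a (m / 2 ^ (i + j - a)) + (2 ^ (i - a) + 2))%nat.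
Proof.
  intros Hj Ha H2. unfold witness_start.
  assert (HN : (2 ^ (i + j) = 2 ^ i * 2 ^ j)%nat) by apply Nat.pow_add_r.
  assert (HB : (2 <= 2 ^ j)%nat) by (apply (Nat.pow_le_mono_r 2 1 j); lia).
  assert (HPD : (2 ^ i * 2 ^ (i + j - a) = 2 ^ (i + j) * 2 ^ (i - a))%nat)
    by (rewrite <- !Nat.pow_add_r; f_equal; lia).
  assert (HP : (1 <= 2 ^ i)%nat) by (apply Nat.neq_0_lt_0, Nat.pow_nonzero; lia).
  assert (HD : (1 <= 2 ^ (i + j - a))%nat) by (apply Nat.neq_0_lt_0, Nat.pow_nonzero; lia).
  set (P := (2 ^ i)%nat) in *. set (N := (2 ^ (i + j))%nat) in *.
  set (D := (2 ^ (i + j - a))%nat) in *. set (E := (2 ^ (i - a))%nat) in *.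
  set (c := (P - 1)%nat). assert (HPc : P = S c) by (unfold c; lia).
  assert (H2N : (2 * P <= N)%nat) by (rewrite HN; nia).
  assert (Hm : (m < D * (m / D) + D)%nat).
  { pose proof (Nat.div_mod m D ltac:(lia)). pose proof (Nat.mod_upper_bound m D ltac:(lia)). lia. }
  set (m0 := (m / D)%nat) in *. set (X := (c * m0 * D - P)%nat).
  assert (HX : (X < N * (X / N) + N)%nat).
  { pose proof (Nat.div_mod X N ltac:(lia)). pose proof (Nat.mod_upper_bound X N ltac:(lia)). lia. }
  set (p0 := (X / N)%nat) in *.
  destruct (Nat.lt_ge_cases p (p0 + (E + 2))) as [Hlt|Hge]; [exact Hlt|exfalso].
  (* p N < c (m + 1) + P <= c m0 D + c D + P < N (p0 + 1) + 2 P + N E <= N (p0 + E + 2) *)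
  assert ((p0 + (E + 2)) * N <= p * N)%nat by (apply Nat.mul_le_mono_r; exact Hge).
  assert (c * (m + 1) <= c * (D * m0 + D))%nat by (apply Nat.mul_le_mono_l; lia).
  assert (c * D < P * D)%nat by (apply Nat.mul_lt_mono_pos_r; lia).
  unfold X in HX. lia.
Qed.

Lemma in_near_multiple_candidates (i j a m : nat) :
  (1 <= i)%nat -> (1 <= j)%nat -> (a <= i)%nat -> near_multiple i j m ->
  In m (near_multiple_candidates i j a (m / 2 ^ (i + j - a))).
Proof.
  intros Hi Hj Ha [p [H1 H2]]. apply in_flat_map. exists p. split.
  - apply in_seq. split.
    + exact (witness_start_le i j a m p Ha H1).
    + exact (witness_start_gt i j a m p Hj Ha H2).
  - apply in_map_iff.
    assert (HP : (2 <= 2 ^ i)%nat) by (apply (Nat.pow_le_mono_r 2 1 i); lia).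
    destruct (near_multiple_index_window _ _ p m HP H1 H2) as [Hq1 Hq2].
    exists ((p * 2 ^ (i + j) + 2 ^ i) / (2 ^ i - 1) - m)%nat.
    split; [lia | apply in_seq; lia].
Qed.

Lemma Qhat_refine (i j n m : nat) (x z : R) :
  (i + j <= n)%nat -> in_dyadic n m x -> in_dyadic n m z -> Qhat i j x -> Qhat i j z.
Proof.
  intros Hn Hx Hz [ml [Hml [Hxl Hy]]]. exists ml. split; [exact Hml|]. split; [|exact Hy].
  rewrite (in_dyadic_coarse_index _ _ _ _ x Hn Hx Hxl).
  apply in_dyadic_coarsen; assumption.
Qed.

Lemma Qhat_near_multiple (i j n m : nat) (x : R) :
  (1 <= i)%nat -> (i + j <= n)%nat -> in_dyadic n m x -> Qhat i j x ->
  near_multiple i j (m / 2 ^ (n - (i + j))).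
Proof.
  intros Hi Hn Hx [ml [_ [Hxl [y [Hyl HQ]]]]].
  rewrite <- (in_dyadic_coarse_index _ _ _ _ x Hn Hx Hxl).
  exact (Q_near_multiple i j ml y Hi Hyl HQ).
Qed.

Lemma sum_j_upto_S (j : nat -> nat) (l : nat) :
  sum_j_upto j (S (S l)) = (sum_j_upto j (S l) + j (S l))%nat.
Proof.
  unfold sum_j_upto. rewrite !Nat.sub_succ, !Nat.sub_0_r.
  change (list_sum (map j (seq 1 (S l))) = list_sum (map j (seq 1 l)) + j (S l))%nat.
  rewrite seq_S, map_app, list_sum_app. simpl. lia.
Qed.

Section Levels.

Variables i j : nat -> nat.

(* Level 0 is the trivial partition D_0 = {[0, 1)}, whose only index is 0. *)
Definition level (l : nat) : nat :=
  match l with O => O | S _ => (i l + j l)%nat end.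

Fixpoint candidates (l : nat) : list nat :=
  match l with
  | O => 0%nat :: nil
  | S l' => flat_map (near_multiple_candidates (i (S l')) (j (S l')) (level l')) (candidates l')
  end.

Lemma level_pos (l : nat) : (1 <= l)%nat -> level l = (i l + j l)%nat.
Proof. destruct l; [lia | reflexivity]. Qed.

Lemma length_candidates_S (l : nat) :
  (length (candidates (S l)) <= 15 * 2 ^ (i (S l) - level l) * length (candidates l))%nat.
Proof.
  cbn [candidates].
  rewrite (flat_map_constant_length (c := ((2 ^ (i (S l) - level l) + 2) * 5)%nat))
    by (intros; apply near_multiple_candidates_length).
  assert (1 <= 2 ^ (i (S l) - level l))%nat by (apply Nat.neq_0_lt_0, Nat.pow_nonzero; lia).
  nia.
Qed.

Variable k : nat.
Hypothesis hinc : forall l : nat, (1 <= l < k)%nat -> (i l < i (S l))%nat.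
Hypothesis hjpos : forall l : nat, (1 <= l <= k)%nat -> (1 <= j l)%nat.
Hypothesis hgap : forall l : nat, (1 <= l < k)%nat -> (j l <= i (S l) - i l)%nat.

Lemma i_pos (hi1 : (1 <= i 1%nat)%nat) (l : nat) : (1 <= l <= k)%nat -> (1 <= i l)%nat.
Proof.
  induction l as [|l IH]; intros Hl; [lia|].
  destruct l as [|l]; [exact hi1|].
  specialize (hinc (S l) ltac:(lia)). specialize (IH ltac:(lia)). lia.
Qed.

Lemma level_le_next (l : nat) : (l < k)%nat -> (level l <= i (S l))%nat.
Proof.
  intros Hl. destruct l as [|l]; simpl; [lia|].
  specialize (hinc (S l) ltac:(lia)). specialize (hgap (S l) ltac:(lia)). lia.
Qed.

Lemma level_mono (l l' : nat) : (l <= l' <= k)%nat -> (level l <= level l')%nat.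
Proof.
  induction l' as [|l' IH]; intros Hl; [replace l with 0%nat by lia; lia|].
  destruct (Nat.eq_dec l (S l')) as [->|Hne]; [lia|].
  specialize (IH ltac:(lia)). pose proof (level_le_next l' ltac:(lia)).
  rewrite (level_pos (S l')) by lia. lia.
Qed.

Lemma candidates_complete (hi1 : (1 <= i 1%nat)%nat) (l m : nat) :
  (l <= k)%nat -> (m < 2 ^ level l)%nat ->
  (forall l', (1 <= l' <= l)%nat ->
     near_multiple (i l') (j l') (m / 2 ^ (level l - level l'))) ->
  In m (candidates l).
Proof.
  revert m. induction l as [|l IH]; intros m Hl Hm Hnear.
  - simpl in Hm. left. lia.
  - cbn [candidates]. apply in_flat_map.
    pose proof (level_mono l (S l) ltac:(lia)) as Hmono.
    set (d := (level (S l) - level l)%nat).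
    exists (m / 2 ^ d)%nat. split.
    + apply IH; [lia| |].
      * apply Nat.Div0.div_lt_upper_bound. rewrite <- Nat.pow_add_r.
        replace (d + level l)%nat with (level (S l)) by (unfold d; lia). exact Hm.
      * intros l' Hl'. rewrite Nat.Div0.div_div, <- Nat.pow_add_r.
        pose proof (level_mono l' l ltac:(lia)).
        replace (d + (level l - level l'))%nat with (level (S l) - level l')%nat
          by (unfold d; lia).
        apply Hnear. lia.
    + specialize (Hnear (S l) ltac:(lia)).
      rewrite Nat.sub_diag, Nat.pow_0_r, Nat.div_1_r in Hnear.
      unfold d. rewrite (level_pos (S l)) by lia.
      apply in_near_multiple_candidates;
        [apply (i_pos hi1) | apply hjpos | apply level_le_next | exact Hnear]; lia.
Qed.

Lemma length_candidates (l : nat) :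
  (1 <= l <= k)%nat ->
  (length (candidates l) * 2 ^ sum_j_upto j l <= 15 ^ l * 2 ^ i l)%nat.
Proof.
  induction l as [|l IH]; intros Hl; [lia|].
  pose proof (length_candidates_S l) as Hstep.
  destruct l as [|l].
  - change (sum_j_upto j 1) with 0%nat.
    change (length (candidates 0)) with 1%nat in Hstep.
    change (level 0) with 0%nat in Hstep.
    rewrite Nat.sub_0_r in Hstep. rewrite Nat.pow_0_r, Nat.pow_1_r. lia.
  - specialize (IH ltac:(lia)).
    pose proof (level_le_next (S l) ltac:(lia)) as Hle.
    rewrite level_pos in Hstep, Hle by lia.
    assert (Hpow : (2 ^ i (S (S l))
      = 2 ^ (i (S (S l)) - (i (S l) + j (S l))) * 2 ^ i (S l) * 2 ^ j (S l))%nat)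
      by (rewrite <- !Nat.pow_add_r; f_equal; lia).
    rewrite sum_j_upto_S, Nat.pow_add_r, Hpow.
    change (15 ^ S (S l))%nat with (15 * 15 ^ S l)%nat.
    set (E := (2 ^ (i (S (S l)) - (i (S l) + j (S l))))%nat) in *.
    set (L := length (candidates (S l))) in *.
    set (L' := length (candidates (S (S l)))) in *.
    apply (Nat.le_trans _ (15 * E * L * (2 ^ sum_j_upto j (S l) * 2 ^ j (S l))));
      [apply Nat.mul_le_mono_r; exact Hstep|].
    apply (Nat.mul_le_mono_l _ _ (15 * E * 2 ^ j (S l))) in IH.
    lia.
Qed.

Lemma level_le_last (l : nat) : (1 <= l <= k)%nat -> (i l + j l <= i k + j k)%nat.
Proof.
  intros Hl. pose proof (level_mono l k ltac:(lia)) as Hle.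
  rewrite !level_pos in Hle by lia. exact Hle.
Qed.

Lemma Qhat_multi_index_in_candidates (hi1 : (1 <= i 1%nat)%nat) (m : nat) :
  (1 <= k)%nat -> (m < 2 ^ (i k + j k))%nat ->
  Qhat_multi k i j (INR m / 2 ^ (i k + j k)) -> In m (candidates k).
Proof.
  intros hk Hm Hx. apply candidates_complete; [exact hi1 | lia | rewrite level_pos by lia; exact Hm |].
  intros l Hl. rewrite !level_pos by lia.
  apply (Qhat_near_multiple _ _ _ m (INR m / 2 ^ (i k + j k))).
  - exact (i_pos hi1 l Hl).
  - exact (level_le_last l Hl).
  - apply in_dyadic_left_end.
  - exact (Hx l Hl).
Qed.

End Levels.

Lemma classical_filter {A : Type} (P : A -> Prop) (l : list A) :
  NoDup l -> exists s, NoDup s /\ forall x, In x s <-> In x l /\ P x.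
Proof.
  intros Hl.
  exists (filter (fun x => if excluded_middle_informative (P x) then true else false) l).
  split; [apply NoDup_filter, Hl|].
  intros x. rewrite filter_In.
  destruct (excluded_middle_informative (P x)); intuition discriminate.
Qed.

Lemma INR_le_pow_powerRZ (len a b c k : nat) :
  (len * 2 ^ b <= c ^ k * 2 ^ a)%nat ->
  INR len <= INR c ^ k * powerRZ 2 (Z.of_nat a - Z.of_nat b).
Proof.
  intros H. apply le_INR in H. rewrite !mult_INR, !INR_pow2, pow_INR in H.
  unfold Z.sub. rewrite powerRZ_add, powerRZ_neg', <- !pow_powerRZ by lra.
  assert (0 < 2 ^ b) by (apply pow_lt; lra).
  apply Rmult_le_reg_r with (2 ^ b); [assumption|].
  replace (INR c ^ k * (2 ^ a * / 2 ^ b) * 2 ^ b) with (INR c ^ k * 2 ^ a)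
    by (field; lra).
  exact H.
Qed.

Theorem lemma4p4 (k : nat) (i j : nat -> nat)
  (hk : (1 <= k)%nat)
  (hi1 : (1 <= i 1%nat)%nat)
  (hinc : forall l : nat, (1 <= l < k)%nat -> (i l < i (S l))%nat)
  (hjpos : forall l : nat, (1 <= l <= k)%nat -> (1 <= j l)%nat)
  (hgap : forall l : nat, (1 <= l < k)%nat -> (j l <= i (S l) - i l)%nat) :
  exists s : list nat,
    (forall m, In m s -> (m < 2 ^ (i k + j k))%nat) /\
    (forall x : R, Qhat_multi k i j x <->
       exists m, In m s /\ in_dyadic (i k + j k) m x) /\
    INR (length s) <=
      M ^ k * powerRZ 2 (Z.of_nat (i k) - Z.of_nat (sum_j_upto j k))%Z.
Proof.
  destruct (classical_filter (fun m => forall z, in_dyadic (i k + j k) m z -> Qhat_multi k i j z)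
              (seq 0 (2 ^ (i k + j k))) (seq_NoDup _ _)) as [s [Hnodup Hs]].
  exists s. split; [|split].
  - intros m Hm. apply Hs, proj1, in_seq in Hm. lia.
  - intros x. split.
    + intros Hx. destruct (Hx k ltac:(lia)) as [m [Hm [Hxm _]]].
      exists m. split; [|exact Hxm]. apply Hs. split; [apply in_seq; lia|].
      intros z Hz l Hl.
      exact (Qhat_refine _ _ _ m x z (level_le_last i j k hinc hgap l Hl) Hxm Hz (Hx l Hl)).
    + intros [m [Hm Hx]]. apply Hs in Hm. exact (proj2 Hm x Hx).
  - replace M with (INR 15) by (unfold M; simpl; lra).
    apply INR_le_pow_powerRZ.
    eapply Nat.le_trans; [|exact (length_candidates i j k hinc hgap k ltac:(lia))].
    apply Nat.mul_le_mono_r, NoDup_incl_length; [exact Hnodup|].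
    intros m Hm. apply Hs in Hm as [Hm Hcov]. apply in_seq in Hm.
    apply (Qhat_multi_index_in_candidates i j k hinc hjpos hgap hi1); [exact hk | lia |].
    apply Hcov, in_dyadic_left_end.
Qed.
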